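(* $\widetilde{\mathbb{K}}_{sm}$ is not an exchange ring, i.e., there exists $r\in\widetilde{\mathbb{K}}_{sm}$ such that $r+e$ is not invertible for every idempotent $e\in\widetilde{\mathbb{K}}_{sm}$.
   Context: Let $I=(0,1]$ and $\mathbb{K}\in\{\mathbb{R},\mathbb{C}\}$. $\mathcal{E}_{M,sm}$ is the set of nets $(r_\varepsilon)_{\varepsilon\in I}\in\mathbb{K}^I$ with $\varepsilon\mapsto r_\varepsilon$ smooth on $I$ and $|r_\varepsilon|=O(\varepsilon^{-N})$ as $\varepsilon\to0$ for some $N\in\mathbb{N}$; $\mathcal{N}_{sm}$ is the set of smooth nets with $|r_\varepsilon|=O(\varepsilon^m)$ for all $m\in\mathbb{N}$; $\widetilde{\mathbb{K}}_{sm}=\mathcal{E}_{M,sm}/\mathcal{N}_{sm}$. A commutative ring $R$ with $1$ is an exchange ring if for each $r\in R$ there is an idempotent $e\in R$ with $r+e$ invertible. *)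

From Stdlib Require Import Reals.
From Coquelicot Require Import Coquelicot.
Open Scope R_scope.

Inductive Kfield := KR | KC.

(* A net (r_eps)_{eps in I}, I = (0,1], is represented by a function
   R -> C; only its values on I matter for all conditions below.
   For K = R we require the imaginary part to vanish on I. *)
Definition in_I (x : R) : Prop := 0 < x <= 1.

(* Smooth real function on (0, +oo): all iterated derivatives exist there.
   (A smooth net on (0,1] is exactly the restriction of such a function.) *)
Definition smooth_pos (g : R -> R) : Prop :=
  forall (n : nat) (x : R), 0 < x -> ex_derive (Derive_n g n) x.

Definition smooth_net (k : Kfield) (r : R -> C) : Prop :=
  smooth_pos (fun x => Re (r x)) /\ smooth_pos (fun x => Im (r x)) /\
  (k = KR -> forall x, in_I x -> Im (r x) = 0).

Definition moderate (r : R -> C) : Prop :=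
  exists (N : nat) (c eps0 : R), 0 < c /\ in_I eps0 /\
    forall eps, 0 < eps <= eps0 -> Cmod (r eps) <= c / eps ^ N.

Definition negligible (r : R -> C) : Prop :=
  forall m : nat, exists c eps0 : R, 0 < c /\ in_I eps0 /\
    forall eps, 0 < eps <= eps0 -> Cmod (r eps) <= c * eps ^ m.

Definition EMsm (k : Kfield) (r : R -> C) : Prop := smooth_net k r /\ moderate r.
Definition Nsm (k : Kfield) (r : R -> C) : Prop := smooth_net k r /\ negligible r.

Definition nadd (r s : R -> C) : R -> C := fun x => Cplus (r x) (s x).
Definition nmul (r s : R -> C) : R -> C := fun x => Cmult (r x) (s x).
Definition nsub (r s : R -> C) : R -> C := fun x => Cminus (r x) (s x).
Definition none : R -> C := fun _ => RtoC 1.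

(* Equality in the quotient Ktilde_sm = E_{M,sm} / N_sm. *)
Definition Keq (k : Kfield) (r s : R -> C) : Prop := Nsm k (nsub r s).

Definition idempotent (k : Kfield) (e : R -> C) : Prop :=
  EMsm k e /\ Keq k (nmul e e) e.

Definition invertible (k : Kfield) (u : R -> C) : Prop :=
  exists s, EMsm k s /\ Keq k (nmul u s) none.

(* The net r_eps = (sin(1/eps) - 1)/2 oscillates between 0 and -1 infinitely often as eps -> 0.
   For an idempotent e, e_eps^2 - e_eps is negligible, so near 0 the continuous net e_eps stays
   close to 0 throughout or close to 1 throughout.  In the first case r + e is negligibly small
   at the points where r_eps = 0, in the second at the points where r_eps = -1.  But an
   invertible element u satisfies |u_eps| >= c eps^N for all small eps, so r + e is never
   invertible. *)
From Stdlib Require Import Reals Lra.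
From Coquelicot Require Import Coquelicot.
Open Scope R_scope.

Definition clusters_at_0 (A : R -> Prop) : Prop :=
  forall a, 0 < a -> exists eps, A eps /\ 0 < eps <= a.

Definition negligible_on (A : R -> Prop) (u : R -> C) : Prop :=
  forall m : nat, exists c a0 : R, 0 < c /\ 0 < a0 /\
    forall eps, A eps -> 0 < eps <= a0 -> Cmod (u eps) <= c * eps ^ m.

Lemma negligible_on_dominated (A : R -> Prop) (u w : R -> C) (K : R) :
  0 <= K -> negligible w ->
  (forall eps, A eps -> 0 < eps -> Cmod (u eps) <= K * Cmod (w eps)) ->
  negligible_on A u.
Proof.
intros HK Hw Hdom m.
destruct (Hw m) as [c [a0 [Hc [Ha0 Hb]]]]; unfold in_I in Ha0.
exists ((K + 1) * c), a0; split; [nra | split; [lra |]].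
intros eps HA Heps.
assert (Hpow : 0 <= eps ^ m) by (apply pow_le; lra).
apply Rle_trans with (1 := Hdom eps HA (proj1 Heps)).
apply Rle_trans with (K * (c * eps ^ m)); [apply Rmult_le_compat_l; auto |].
rewrite <- Rmult_assoc; apply Rmult_le_compat_r; nra.
Qed.

Lemma Cmod_ge_1_sub (a : C) : 1 - Cmod (Cminus a 1) <= Cmod a.
Proof.
assert (T := Cmod_triangle a (Copp (Cminus a 1))).
replace (Cplus a (Copp (Cminus a 1))) with (RtoC 1) in T by ring.
rewrite Cmod_opp, Cmod_1 in T; lra.
Qed.

Lemma invertible_lower_bound (k : Kfield) (u : R -> C) : invertible k u ->
  exists (N : nat) (c a0 : R), 0 < c /\ 0 < a0 /\
    forall eps, 0 < eps <= a0 -> c * eps ^ N <= Cmod (u eps).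
Proof.
intros [s [[_ [N [cs [as0 [Hcs [Has Hs]]]]]] [_ Hus]]].
destruct (Hus 1%nat) as [cu [au [Hcu [Hau Hu]]]]; unfold in_I in *.
set (a0 := Rmin (Rmin as0 au) (/ (2 * cu))).
assert (Ha0 : a0 <= as0 /\ a0 <= au /\ a0 <= / (2 * cu)).
{ unfold a0; repeat split;
    eauto using Rle_trans, Rmin_l, Rmin_r. }
exists N, (/ (2 * cs)), a0; split; [apply Rinv_0_lt_compat; lra | split].
{ unfold a0; repeat apply Rmin_glb_lt; try lra; apply Rinv_0_lt_compat; lra. }
intros eps Heps.
assert (HepsN : 0 < eps ^ N) by (apply pow_lt; lra).
assert (Hhalf : 1 / 2 <= Cmod (u eps) * Cmod (s eps)).
{ rewrite <- Cmod_mult.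
  apply Rle_trans with (2 := Cmod_ge_1_sub _).
  assert (Hcu_eps : cu * eps <= 1 / 2).
  { apply Rle_trans with (cu * / (2 * cu)); [apply Rmult_le_compat_l; lra |].
    right; field; lra. }
  specialize (Hu eps ltac:(lra)); simpl in Hu; unfold nsub, nmul, none in Hu; lra. }
assert (Hsb : Cmod (s eps) <= cs / eps ^ N) by (apply Hs; lra).
assert (Hu0 := Cmod_ge_0 (u eps)).
assert (H : 1 / 2 <= Cmod (u eps) * (cs / eps ^ N))
  by (apply Rle_trans with (1 := Hhalf); apply Rmult_le_compat_l; auto).
apply Rmult_le_reg_r with (2 * cs / eps ^ N).
{ apply Rdiv_lt_0_compat; lra. }
replace (/ (2 * cs) * eps ^ N * (2 * cs / eps ^ N)) with 1 by (field; lra).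
unfold Rdiv in *; lra.
Qed.

Lemma not_invertible_of_negligible_on (k : Kfield) (A : R -> Prop) (u : R -> C) :
  clusters_at_0 A -> negligible_on A u -> ~ invertible k u.
Proof.
intros Hacc Hneg Hinv.
destruct (invertible_lower_bound k u Hinv) as [N [c [a0 [Hc [Ha0 Hlow]]]]].
destruct (Hneg (S N)) as [c' [a1 [Hc' [Ha1 Hup]]]].
destruct (Hacc (Rmin (Rmin a0 a1) (c / (2 * c')))) as [eps [HA Heps]].
{ repeat apply Rmin_glb_lt; try lra; apply Rdiv_lt_0_compat; lra. }
assert (Hmin := Rmin_l (Rmin a0 a1) (c / (2 * c'))).
assert (Hmin' := Rmin_r (Rmin a0 a1) (c / (2 * c'))).
assert (H0 := Rmin_l a0 a1); assert (H1 := Rmin_r a0 a1).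
assert (HepsN : 0 < eps ^ N) by (apply pow_lt; lra).
assert (Hc_eps : c <= c' * eps).
{ apply Rmult_le_reg_r with (eps ^ N); auto.
  apply Rle_trans with (1 := Hlow eps ltac:(lra)).
  apply Rle_trans with (1 := Hup eps HA ltac:(lra)).
  simpl; right; ring. }
assert (c' * eps <= c / 2).
{ apply Rle_trans with (c' * (c / (2 * c'))); [apply Rmult_le_compat_l; lra |].
  right; field; lra. }
lra.
Qed.

Lemma Cmod_almost_idempotent (z : C) : Cmod (Cminus (Cmult z z) z) <= 1/8 ->
  (Cmod z <= 2 * Cmod (Cminus (Cmult z z) z) /\ Re z <= 1/4) \/
  (Cmod (Cminus z 1) <= 2 * Cmod (Cminus (Cmult z z) z) /\ 3/4 <= Re z).
Proof.
replace (Cminus (Cmult z z) z) with (Cmult z (Cminus z 1)) by ring.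
rewrite Cmod_mult.
assert (Hsum := Cmod_ge_1_sub z).
assert (Hre := re_le_Cmod z).
assert (Hre1 := re_le_Cmod (Cminus z 1)).
replace (Re (Cminus z 1)) with (Re z - 1) in Hre1 by (destruct z; simpl; ring).
apply Rabs_le_between in Hre; apply Rabs_le_between in Hre1.
assert (H0 := Cmod_ge_0 z); assert (H1 := Cmod_ge_0 (Cminus z 1)).
intros Hsmall.
destruct (Rle_lt_dec (1/2) (Cmod (Cminus z 1))); [left | right]; split; nra.
Qed.

Lemma continuous_no_crossing (f : R -> R) (lo hi b : R) : lo < hi ->
  (forall x, 0 < x <= b -> continuity_pt f x) ->
  (forall x, 0 < x <= b -> f x <= lo \/ hi <= f x) ->
  forall x y, 0 < x <= b -> 0 < y <= b -> f x <= lo -> hi <= f y -> False.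
Proof.
intros Hlh Hcont Hgap x y Hx Hy Hfx Hfy.
set (mid := (lo + hi) / 2).
assert (Hmid : forall z, 0 < z <= b -> f z <> mid)
  by (intros z Hz; destruct (Hgap z Hz); unfold mid; lra).
destruct (Rtotal_order x y) as [Hxy | [-> | Hyx]]; [| lra |].
- destruct (Ranalysis5.IVT_interv (fun t => f t - mid) x y) as [z [Hz Hfz]];
    [| lra | unfold mid; lra | unfold mid; lra |].
  + intros t Ht; apply continuity_pt_minus; [apply Hcont; lra | apply continuity_pt_const].
    intros ? ?; reflexivity.
  + apply (Hmid z); lra.
- destruct (Ranalysis5.IVT_interv (fun t => mid - f t) y x) as [z [Hz Hfz]];
    [| lra | unfold mid; lra | unfold mid; lra |].
  + intros t Ht; apply continuity_pt_minus; [apply continuity_pt_const | apply Hcont; lra].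
    intros ? ?; reflexivity.
  + apply (Hmid z); lra.
Qed.

Lemma continuous_gap_dichotomy (f : R -> R) (lo hi b : R) : lo < hi -> 0 < b ->
  (forall x, 0 < x <= b -> continuity_pt f x) ->
  (forall x, 0 < x <= b -> f x <= lo \/ hi <= f x) ->
  (forall x, 0 < x <= b -> f x <= lo) \/ (forall x, 0 < x <= b -> hi <= f x).
Proof.
intros Hlh Hb Hcont Hgap.
assert (Hbb : 0 < b <= b) by lra.
destruct (Hgap b Hbb) as [Hfb | Hfb]; [left | right]; intros x Hx;
  destruct (Hgap x Hx) as [Hfx | Hfx]; auto; exfalso.
- exact (continuous_no_crossing f lo hi b Hlh Hcont Hgap b x Hbb Hx Hfb Hfx).
- exact (continuous_no_crossing f lo hi b Hlh Hcont Hgap x b Hx Hbb Hfx Hfb).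
Qed.

Lemma smooth_pos_continuity (g : R -> R) (x : R) :
  smooth_pos g -> 0 < x -> continuity_pt g x.
Proof.
intros Hg Hx; apply continuity_pt_filterlim.
apply (ex_derive_continuous g x), (Hg 0%nat x Hx).
Qed.

Lemma almost_idempotent_dichotomy (e : R -> C) :
  smooth_pos (fun x => Re (e x)) -> negligible (nsub (nmul e e) e) ->
  exists b, 0 < b /\
    ((forall x, 0 < x <= b -> Cmod (e x) <= 2 * Cmod (nsub (nmul e e) e x)) \/
     (forall x, 0 < x <= b -> Cmod (Cminus (e x) 1) <= 2 * Cmod (nsub (nmul e e) e x))).
Proof.
intros Hsm Hneg.
destruct (Hneg 1%nat) as [c [a [Hc [Ha Hbound]]]]; unfold in_I in Ha.
set (b := Rmin a (/ (8 * c))).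
assert (Hb : 0 < b) by (apply Rmin_glb_lt; [lra | apply Rinv_0_lt_compat; lra]).
assert (Hpt : forall x, 0 < x <= b ->
  (Cmod (e x) <= 2 * Cmod (nsub (nmul e e) e x) /\ Re (e x) <= 1/4) \/
  (Cmod (Cminus (e x) 1) <= 2 * Cmod (nsub (nmul e e) e x) /\ 3/4 <= Re (e x))).
{ intros x Hx; apply Cmod_almost_idempotent.
  assert (Hxa := Rmin_l a (/ (8 * c))); assert (Hxc := Rmin_r a (/ (8 * c))).
  apply Rle_trans with (c * x ^ 1); [apply Hbound; unfold b in Hx; lra |].
  apply Rle_trans with (c * / (8 * c)); [simpl; apply Rmult_le_compat_l; unfold b in Hx; lra |].
  right; field; lra. }
exists b; split; auto.
destruct (continuous_gap_dichotomy (fun x => Re (e x)) (1/4) (3/4) b) as [Hlo | Hhi].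
- lra.
- exact Hb.
- intros x Hx; apply smooth_pos_continuity; auto; lra.
- intros x Hx; destruct (Hpt x Hx) as [[_ H] | [_ H]]; auto.
- left; intros x Hx; destruct (Hpt x Hx) as [[H _] | [_ H]]; auto.
  specialize (Hlo x Hx); lra.
- right; intros x Hx; destruct (Hpt x Hx) as [[_ H] | [H _]]; auto.
  specialize (Hhi x Hx); lra.
Qed.

Lemma sin_inv_level_clusters (v t0 b : R) : sin t0 = v -> 0 < b ->
  clusters_at_0 (fun eps => eps <= b /\ sin (/ eps) = v).
Proof.
intros Hsin Hb a Ha.
assert (Hpi := PI_RGT_0).
assert (Hmin := Rmin_l a b); assert (Hmin' := Rmin_r a b).
set (a' := Rmin a b) in *.
assert (Ha' : 0 < a') by (apply Rmin_glb_lt; lra).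
destruct (INR_archimed (2 * PI) (/ a' - t0)) as [n Hn]; [lra |].
set (t := t0 + 2 * INR n * PI).
assert (Ht : / a' < t) by (unfold t; lra).
assert (Ht0 : 0 < t) by (apply Rlt_trans with (/ a'); auto; apply Rinv_0_lt_compat; auto).
assert (Hle : / t <= a').
{ left; rewrite <- (Rinv_inv a'); apply Rinv_lt_contravar; auto.
  apply Rmult_lt_0_compat; auto; apply Rinv_0_lt_compat; auto. }
exists (/ t); repeat split.
- lra.
- rewrite Rinv_inv; unfold t; rewrite sin_period; exact Hsin.
- apply Rinv_0_lt_compat; exact Ht0.
- lra.
Qed.

(* Closed under derivation on (0, +oo), so all its members are smooth there. *)
Inductive inv_trig_poly : (R -> R) -> Prop :=
| inv_trig_poly_const a : inv_trig_poly (fun _ => a)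
| inv_trig_poly_inv : inv_trig_poly (fun x => / x)
| inv_trig_poly_sin : inv_trig_poly (fun x => sin (/ x))
| inv_trig_poly_cos : inv_trig_poly (fun x => cos (/ x))
| inv_trig_poly_plus f g :
    inv_trig_poly f -> inv_trig_poly g -> inv_trig_poly (fun x => f x + g x)
| inv_trig_poly_mult f g :
    inv_trig_poly f -> inv_trig_poly g -> inv_trig_poly (fun x => f x * g x).

Lemma inv_trig_poly_is_derive (f : R -> R) : inv_trig_poly f ->
  exists f', inv_trig_poly f' /\ forall x, 0 < x -> is_derive f x (f' x).
Proof.
induction 1 as [a | | | | f g _ [f' [Hf' Df]] _ [g' [Hg' Dg]]
                | f g Hf [f' [Hf' Df]] Hg [g' [Hg' Dg]]].
- exists (fun _ => 0); split; [constructor |].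
  intros x _; auto_derive; auto.
- exists (fun x => (-1) * (/ x * / x)); split; [repeat constructor |].
  intros x Hx; auto_derive; [lra | field; lra].
- exists (fun x => cos (/ x) * ((-1) * (/ x * / x))); split; [repeat constructor |].
  intros x Hx; auto_derive; [lra | field; lra].
- exists (fun x => sin (/ x) * (/ x * / x)); split; [repeat constructor |].
  intros x Hx; auto_derive; [lra | field; lra].
- exists (fun x => f' x + g' x); split; [constructor; auto |].
  intros x Hx; apply (is_derive_plus f g); auto.
- exists (fun x => f' x * g x + f x * g' x); split; [repeat constructor; auto |].
  intros x Hx; apply (is_derive_mult f g x (f' x) (g' x)); auto.
  intros; apply Rmult_comm.
Qed.

Lemma locally_of_pos (x : R) (P : R -> Prop) :
  0 < x -> (forall y, 0 < y -> P y) -> locally x P.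
Proof.
intros Hx HP; exists (mkposreal x Hx); intros y Hy; apply HP.
unfold ball in Hy; simpl in Hy; unfold AbsRing_ball, abs, minus, plus, opp in Hy; simpl in Hy.
apply Rabs_lt_between' in Hy; lra.
Qed.

Lemma inv_trig_poly_Derive_n (f : R -> R) (n : nat) : inv_trig_poly f ->
  exists h, inv_trig_poly h /\ forall x, 0 < x -> Derive_n f n x = h x.
Proof.
intros Hf; induction n as [| n [h [Hh Eh]]].
- exists f; split; auto.
- destruct (inv_trig_poly_is_derive h Hh) as [h' [Hh' Dh]].
  exists h'; split; auto.
  intros x Hx; simpl.
  rewrite (Derive_ext_loc _ h); [apply is_derive_unique, Dh; auto |].
  apply locally_of_pos; auto.
Qed.

Lemma inv_trig_poly_smooth (f : R -> R) : inv_trig_poly f -> smooth_pos f.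
Proof.
intros Hf n x Hx.
destruct (inv_trig_poly_Derive_n f n Hf) as [h [Hh Eh]].
destruct (inv_trig_poly_is_derive h Hh) as [h' [_ Dh]].
apply ex_derive_ext_loc with h; [apply locally_of_pos; auto; intros; symmetry; auto |].
exists (h' x); apply Dh; auto.
Qed.

Definition sin_inv_net (x : R) : R := (sin (/ x) - 1) / 2.

Lemma sin_inv_net_EMsm (k : Kfield) : EMsm k (fun x => RtoC (sin_inv_net x)).
Proof.
split; [split; [| split] |].
- apply inv_trig_poly_smooth.
  apply (inv_trig_poly_mult (fun x => sin (/ x) - 1) (fun _ => / 2));
    [apply (inv_trig_poly_plus (fun x => sin (/ x)) (fun _ => - 1)) |]; constructor.
- exact (inv_trig_poly_smooth _ (inv_trig_poly_const 0)).
- reflexivity.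
- exists 0%nat, 1, 1; split; [lra | split; [unfold in_I; lra |]].
  intros eps _; rewrite Cmod_R; unfold sin_inv_net.
  assert (Hsin := SIN_bound (/ eps)).
  apply Rabs_le; simpl; lra.
Qed.

Theorem lemma4p3 (k : Kfield) :
  exists r : R -> C, EMsm k r /\
    forall e : R -> C, idempotent k e -> ~ invertible k (nadd r e).
Proof.
exists (fun x => RtoC (sin_inv_net x)); split; [apply sin_inv_net_EMsm |].
intros e [[[Hsm _] _] [_ Hneg]].
destruct (almost_idempotent_dichotomy e Hsm Hneg) as [b [Hb [Hnear0 | Hnear1]]].
- apply (not_invertible_of_negligible_on k (fun eps => eps <= b /\ sin (/ eps) = 1)).
  { exact (sin_inv_level_clusters 1 (PI / 2) b sin_PI2 Hb). }
  apply (negligible_on_dominated _ _ _ 2 ltac:(lra) Hneg).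
  intros eps [Hle Hsin] Hpos; unfold nadd, sin_inv_net; rewrite Hsin.
  replace ((1 - 1) / 2) with 0 by field; rewrite Cplus_0_l.
  apply Hnear0; lra.
- apply (not_invertible_of_negligible_on k (fun eps => eps <= b /\ sin (/ eps) = -1)).
  { exact (sin_inv_level_clusters (-1) (3 * (PI / 2)) b sin_3PI2 Hb). }
  apply (negligible_on_dominated _ _ _ 2 ltac:(lra) Hneg).
  intros eps [Hle Hsin] Hpos; unfold nadd, sin_inv_net; rewrite Hsin.
  replace (Cplus (RtoC ((-1 - 1) / 2)) (e eps)) with (Cminus (e eps) 1);
    [apply Hnear1; lra |].
  destruct (e eps) as [p q]; unfold Cminus, Cplus, Copp, RtoC; simpl; f_equal; field.
Qed.
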